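(* For an integer $x\ge3$ and an odd prime $p$, the following are equivalent: (1) $p$ divides $x$; (2) $\mathcal{F}_{\{1,x\}}\subseteq\mathcal{F}_{\{1,p,2p\}}$ and $\mathcal{F}_{\{2,x\}}\subseteq\mathcal{F}_{\{2,p,2p\}}$.
   Context: $\mathbb{N}=\{1,2,\dots\}$, $\mathbb{N}_0=\{0\}\cup\mathbb{N}$. The Kirch topology $\tau_K$ on $\mathbb{N}$ is generated by the base of all $a+b\mathbb{N}_0=\{a+bn:n\in\mathbb{N}_0\}$ with $a,b\in\mathbb{N}$ coprime and $b$ square-free. Closures $\overline{U}$ are in $\tau_K$; $\tau_y=\{U\in\tau_K:y\in U\}$. For finite $E\subseteq\mathbb{N}$, $\mathcal{F}_E=\{B\subseteq\mathbb{N}:\exists (U_y)_{y\in E}\in\prod_{y\in E}\tau_y\ (\bigcap_{y\in E}\overline{U_y}\subseteq B)\}$. *)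

(* Natural numbers: N = {1,2,...} is modelled as
   the positive elements of [nat]; subsets of N are predicates [nat -> Prop]
   that hold only on positive numbers. *)
From mathcomp Require Import all_boot.
Set Implicit Arguments. Unset Strict Implicit. Unset Printing Implicit Defensive.

Definition squarefree (b : nat) : Prop := forall d, 1 < d -> ~ (d * d %| b).

Definition aprog (a b : nat) : nat -> Prop := fun n => exists k, n = a + b * k.

Definition kirch_basic (a b : nat) : Prop :=
  0 < a /\ 0 < b /\ coprime a b /\ squarefree b.

Definition kirch_open (U : nat -> Prop) : Prop :=
  (forall n, U n -> 0 < n) /\
  (forall n, U n -> exists a b, kirch_basic a b /\ aprog a b n /\
                               (forall m, aprog a b m -> U m)).

Definition kclosure (U : nat -> Prop) : nat -> Prop :=
  fun n => 0 < n /\ forall V, kirch_open V -> V n -> exists m, V m /\ U m.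

Definition tau (y : nat) (U : nat -> Prop) : Prop := kirch_open U /\ U y.

Definition FE (E : seq nat) (B : nat -> Prop) : Prop :=
  (forall n, B n -> 0 < n) /\
  exists U : nat -> (nat -> Prop),
    (forall y, y \in E -> tau y (U y)) /\
    (forall n, (0 < n /\ forall y, y \in E -> kclosure (U y) n) -> B n).

Definition FE_sub (E1 E2 : seq nat) : Prop := forall B, FE E1 B -> FE E2 B.

(* A point n lies in the closure of a + bN_0 (b squarefree) iff n = a modulo
   gcd(d, b) for every squarefree d coprime to n.  If p | x, some neighbourhood
   x + bN_0 of x has b coprime to p; with b' the odd part of b, a point n in the
   closures of p + bN_0 and 2p + b'N_0 satisfies p = n = 2p modulo gcd(d, b'),
   so gcd(d, b) divides 2, and modulo 2 both n and x are odd.  Conversely, if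
   p does not divide x and x <> c (mod p), keep the neighbourhood x + pN_0 of x;
   for any neighbourhoods of c, p and 2p, a Chinese remainder witness n = c
   (mod p) divisible by the p-free parts of their differences lies in all
   three closures but not in that of x + pN_0.  Take c = 2 if x = 1 (mod p)
   and c = 1 otherwise. *)

From mathcomp Require Import all_boot zify.

Lemma aprogP a b m : aprog a b m <-> a <= m /\ m = a %[mod b].
Proof.
split=> [[k ->]|[le_am /eqP]]; first by rewrite leq_addr addnC mulnC modnMDl.
by rewrite eqn_mod_dvd // => /dvdnP[k hk]; exists k; rewrite mulnC -hk; lia.
Qed.

Lemma aprog_self a b : aprog a b a.
Proof. by exists 0; rewrite muln0 addn0. Qed.

Lemma squarefree_gt0 {b} : squarefree b -> 0 < b.
Proof. by case: b => // /(_ 2 isT); rewrite dvdn0. Qed.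

Lemma squarefree1 : squarefree 1.
Proof. by move=> d d_gt1; rewrite dvdn1 muln_eq1; case: eqP d_gt1 => // ->. Qed.

Lemma squarefree_dvd {a b} : squarefree b -> a %| b -> squarefree a.
Proof. by move=> sqb ab d d_gt1 dda; apply: (sqb d d_gt1); apply: dvdn_trans ab. Qed.

Lemma squarefree_prime {p} : prime p -> squarefree p.
Proof.
move=> pp d d_gt1 ddp.
have d_neq1 : d != 1 by rewrite neq_ltn d_gt1 orbT.
have /(prime_nt_dvdP pp d_neq1) dE : d %| p := dvdn_trans (dvdn_mulr d (dvdnn d)) ddp.
have := dvdn_leq (prime_gt0 pp) ddp; rewrite dE; nia.
Qed.

Lemma squarefree_prime_split {b p} : squarefree b -> prime p ->
  exists b' e, [/\ b = b' * e, e %| p & coprime b' p].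
Proof.
move=> sqb pp; have [pb|npb] := boolP (p %| b); last first.
  by exists b, 1; rewrite muln1 dvd1n coprime_sym prime_coprime.
exists (b %/ p), p; split; rewrite ?divnK //.
rewrite coprime_sym prime_coprime //; apply/negP => /dvdnP[k bpE].
by apply: (sqb p (prime_gt1 pp)); apply/dvdnP; exists k; rewrite mulnA -bpE divnK.
Qed.

Lemma coprime_squarefree_divn_gcd {d} b : squarefree d -> coprime (d %/ gcdn d b) b.
Proof.
move=> sqd; set g := gcdn d b; set h := gcdn (d %/ g) b.
have dE : d = d %/ g * g by rewrite divnK ?dvdn_gcdl.
have hd : h %| d by rewrite dE dvdn_mulr ?dvdn_gcdl.
have hg : h %| g by rewrite dvdn_gcd hd dvdn_gcdr.
have hhd : h * h %| d by rewrite dE dvdn_mul ?dvdn_gcdl.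
have h_gt0 : 0 < h := dvdn_gt0 (squarefree_gt0 sqd) hd.
rewrite /coprime -/h eqn_leq h_gt0 andbT leqNgt.
by apply/negP => /sqd.
Qed.

Lemma chinese_squarefree {d b n z} K : 0 < b -> squarefree d ->
  n = z %[mod gcdn d b] -> exists2 m, K <= m & m = n %[mod d] /\ m = z %[mod b].
Proof.
move=> b_gt0 sqd nz; set g := gcdn d b; set d' := d %/ g.
have gb : g %| b := dvdn_gcdr d b.
have dE : d = d' * g by rewrite divnK ?dvdn_gcdl.
have cd'b : coprime d' b := coprime_squarefree_divn_gcd b sqd.
set m := chinese d' b n z.
have mb : m = z %[mod b] := chinese_modr cd'b n z.
have mg : m = n %[mod g] by rewrite -(modn_dvdm m gb) mb modn_dvdm.
have md : m = n %[mod d].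
  by apply/eqP; rewrite dE chinese_remainder ?(coprime_dvdr gb) // chinese_modl // mg !eqxx.
exists (m + K * (d * b)).
  by rewrite (leq_trans _ (leq_addl _ _)) // leq_pmulr // muln_gt0 b_gt0 squarefree_gt0.
by split; rewrite addnC mulnA; [rewrite mulnAC|]; rewrite modnMDl.
Qed.

Lemma kirch_open_aprog {a b} : 0 < a -> coprime a b -> squarefree b ->
  kirch_open (aprog a b).
Proof.
move=> a_gt0 cab sqb; split=> [n [k ->]|n an]; first by rewrite addn_gt0 a_gt0.
by exists a, b; do !split=> //; exact: squarefree_gt0.
Qed.

Lemma kirch_open_pos : kirch_open (fun n => 0 < n).
Proof.
split=> // n n_gt0; exists 1, 1; do !split=> //; first exact: squarefree1.
  by exists n.-1; lia.
by move=> m [k ->].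
Qed.

Lemma kirch_nbhd {U y} : kirch_open U -> U y ->
  exists b, [/\ coprime y b, squarefree b & forall m, aprog y b m -> U m].
Proof.
move=> [_ openU] Uy; have [a [b [[_ [_ [cab sqb]]] [[k yE] abU]]]] := openU y Uy.
exists b; split=> //; first by rewrite -coprime_modl yE addnC mulnC modnMDl coprime_modl.
by move=> m [j ->]; apply: abU; exists (k + j); rewrite yE; lia.
Qed.

Lemma kclosureS {U V n} : (forall m, U m -> V m) -> kclosure U n -> kclosure V n.
Proof.
move=> UV [n_gt0 clU]; split=> // W openW Wn.
by have [m [Wm Um]] := clU W openW Wn; exists m; split; last exact: UV.
Qed.

Lemma kclosure_aprogP z b n : 0 < b -> kclosure (aprog z b) n <->
  0 < n /\ forall d, squarefree d -> coprime n d -> n = z %[mod gcdn d b].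
Proof.
move=> b_gt0; split=> [[n_gt0 cl]|[n_gt0 nz]].
  split=> // d sqd cnd.
  have [m [/aprogP[_ mn] /aprogP[_ mz]]] :=
    cl _ (kirch_open_aprog n_gt0 cnd sqd) (aprog_self n d).
  rewrite -(modn_dvdm n (dvdn_gcdl d b)) -mn (modn_dvdm m (dvdn_gcdl d b)).
  by rewrite -(modn_dvdm m (dvdn_gcdr d b)) mz modn_dvdm ?dvdn_gcdr.
split=> // V openV Vn; have [d [cnd sqd ndV]] := kirch_nbhd openV Vn.
have [m le_m [mn mz]] := chinese_squarefree (n + z) b_gt0 sqd (nz d sqd cnd).
by exists m; split; [apply: ndV | ]; apply/aprogP; split=> //; lia.
Qed.

Lemma kclosure_aprogM_dvd {z b e n} : 0 < n -> 0 < b * e -> b %| n ->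
  n = z %[mod e] -> kclosure (aprog z (b * e)) n.
Proof.
move=> n_gt0 be_gt0 bn nz; apply/kclosure_aprogP => //; split=> // d _ cnd.
set g := gcdn d (b * e).
have cgb : coprime g b.
  by rewrite coprime_sym (coprime_dvdr (dvdn_gcdl d _)) // (coprime_dvdl bn).
have ge : g %| e by rewrite -(Gauss_dvdr _ cgb) dvdn_gcdr.
by rewrite -(modn_dvdm n ge) nz modn_dvdm.
Qed.

Lemma kclosure_aprog_dvd {z b n} : 0 < n -> 0 < b -> b %| n -> kclosure (aprog z b) n.
Proof.
by move=> n_gt0 b_gt0 bn; rewrite -[b]muln1; apply: kclosure_aprogM_dvd; rewrite ?muln1 ?modn1.
Qed.

Lemma coprime_eq_mod_dvd2 {g n x} : g %| 2 -> coprime n g -> coprime x g ->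
  n = x %[mod g].
Proof.
move=> g2; have: g <= 2 := dvdn_leq (isT : 0 < 2) g2.
case: g g2 => [|[|[|//]]] // _ _; first by rewrite !modn1.
by rewrite !coprimen2 !modn2 => -> ->.
Qed.

Lemma kclosure_aprog_double {a b e x n} : 0 < a -> 0 < b * e -> e %| 2 ->
  coprime a (b * e) -> coprime x (b * e) ->
  kclosure (aprog a (b * e)) n -> kclosure (aprog (2 * a) b) n ->
  kclosure (aprog x (b * e)) n.
Proof.
move=> a_gt0 be_gt0 e2 cab cxb.
have b_gt0 : 0 < b by move: be_gt0; rewrite muln_gt0 => /andP[].
move=> /(kclosure_aprogP _ _ _ be_gt0)[n_gt0 na] /(kclosure_aprogP _ _ _ b_gt0)[_ n2a].
apply/kclosure_aprogP => //; split=> // d sqd cnd.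
set g := gcdn d (b * e); set h := gcdn d b.
have hg : h %| g by rewrite dvdn_gcd dvdn_gcdl dvdn_mulr ?dvdn_gcdr.
have h1 : h = 1.
  have /eqP : 2 * a = a %[mod h].
    by rewrite -(n2a d sqd cnd) -(modn_dvdm n hg) (na d sqd cnd) modn_dvdm.
  rewrite eqn_mod_dvd ?leq_pmull // mul2n -addnn addnK => ha.
  by apply/eqP; rewrite -dvdn1 -(eqP cab) dvdn_gcd ha dvdn_mulr ?dvdn_gcdr.
have cgb : coprime g b.
  by rewrite /coprime -dvdn1 -h1 dvdn_gcd dvdn_gcdr (dvdn_trans (dvdn_gcdl _ _)) ?dvdn_gcdl.
have g2 : g %| 2 by rewrite (dvdn_trans _ e2) // -(Gauss_dvdr _ cgb) dvdn_gcdr.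
apply: coprime_eq_mod_dvd2 g2 _ _.
- by rewrite (coprime_dvdr (dvdn_gcdl _ _)).
- by rewrite (coprime_dvdr (dvdn_gcdr _ _)).
Qed.

Lemma FE2_intro {c x} Uc Ux (B : nat -> Prop) : c != x ->
  tau c Uc -> tau x Ux -> (forall n, B n -> 0 < n) ->
  (forall n, 0 < n -> kclosure Uc n -> kclosure Ux n -> B n) -> FE [:: c; x] B.
Proof.
move=> cx tc tx B_pos clB; split=> //.
exists (fun y => if y == c then Uc else Ux); split.
  by move=> y; rewrite !inE => /orP[]/eqP->; rewrite ?eqxx // eq_sym (negbTE cx).
move=> n [n_gt0 cln]; apply: clB => //.
  by move: (cln c); rewrite inE eqxx; apply.
by move: (cln x); rewrite !inE eqxx orbT eq_sym (negbTE cx); apply.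
Qed.

Lemma FE3_intro {c p q} Uc Up Uq (B : nat -> Prop) :
  c != p -> c != q -> p != q -> tau c Uc -> tau p Up -> tau q Uq ->
  (forall n, B n -> 0 < n) ->
  (forall n, 0 < n -> kclosure Uc n -> kclosure Up n -> kclosure Uq n -> B n) ->
  FE [:: c; p; q] B.
Proof.
move=> cp cq pq tc tp tq B_pos clB; split=> //.
have [pc qc qp] : [/\ (p == c) = false, (q == c) = false & (q == p) = false].
  by split; apply/negbTE; rewrite eq_sym.
exists (fun y => if y == c then Uc else if y == p then Up else Uq); split.
  by move=> y; rewrite !inE => /or3P[]/eqP->; rewrite ?eqxx ?pc ?qc ?qp.
move=> n [n_gt0 cln]; apply: clB => //.
- by move: (cln c); rewrite inE eqxx; apply.
- by move: (cln p); rewrite !inE eqxx orbT pc; apply.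
- by move: (cln q); rewrite !inE eqxx !orbT qc qp; apply.
Qed.

Lemma FE_sub_dvd {c x p} : c < p -> prime p -> p %| x ->
  FE_sub [:: c; x] [:: c; p; 2 * p].
Proof.
move=> cp pp px B [B_pos [U [tU clU]]].
have [tUc [openUx Ux]] : tau c (U c) /\ tau x (U x).
  by split; apply: tU; rewrite !inE eqxx ?orbT.
have [b [cxb sqb bUx]] := kirch_nbhd openUx Ux.
have [b' [e [bE e2 cb'2]]] := squarefree_prime_split sqb (isT : prime 2).
have p_gt0 := prime_gt0 pp.
have cpb : coprime p b := coprime_dvdl px cxb.
have b_gt0 := squarefree_gt0 sqb.
have c2pb' : coprime (2 * p) b'.
  by rewrite coprimeMl coprime_sym cb'2 (coprime_dvdr _ cpb) // bE dvdn_mulr.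
apply: (FE3_intro (U c) (aprog p b) (aprog (2 * p) b')) => //; try lia.
- by split; [apply: kirch_open_aprog | apply: aprog_self].
- split; last exact: aprog_self.
  by apply: kirch_open_aprog => //; [lia | apply: squarefree_dvd sqb _; rewrite bE dvdn_mulr].
move=> n n_gt0 clc clp cl2p; apply: clU; split=> // y; rewrite !inE => /orP[]/eqP-> //.
apply: (kclosureS bUx); move: clp cl2p; rewrite bE in b_gt0 cxb cpb *.
exact: kclosure_aprog_double.
Qed.

Lemma kclosure_aprog_chinese {c p bc b} : 0 < c < p -> prime p ->
  squarefree bc -> coprime b p ->
  exists n, [/\ 0 < n, n = c %[mod p], b %| n & kclosure (aprog c bc) n].
Proof.
move=> /andP[c_gt0 cp] pp sqbc cbp.
have [bc' [e [bcE ep cbc'p]]] := squarefree_prime_split sqbc pp.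
have cMp : coprime (bc' * b) p by rewrite coprimeMl cbc'p.
pose n := chinese (bc' * b) p 0 c.
have Mn : bc' * b %| n by rewrite /dvdn chinese_modl // mod0n.
have np : n = c %[mod p] := chinese_modr cMp 0 c.
have n_gt0 : 0 < n.
  by rewrite lt0n; apply/eqP => n0; move: np; rewrite n0 mod0n modn_small //; lia.
exists n; split=> //; first exact: dvdn_trans (dvdn_mull _ _) Mn.
rewrite bcE; apply: kclosure_aprogM_dvd => //.
- by rewrite -bcE squarefree_gt0.
- exact: dvdn_trans (dvdn_mulr _ _) Mn.
- by rewrite -(modn_dvdm n ep) np modn_dvdm.
Qed.

Lemma not_FE_sub_ndvd {c x p} : 0 < c < p -> prime p -> ~~ (p %| x) -> x %% p != c ->
  ~ FE_sub [:: c; x] [:: c; p; 2 * p].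
Proof.
move=> c_bounds pp npx xpc sub; have /andP[c_gt0 cp] := c_bounds.
have p_gt0 := prime_gt0 pp.
have x_gt0 : 0 < x by rewrite lt0n; apply: contraNneq npx => ->.
have cxp : coprime x p by rewrite coprime_sym prime_coprime.
pose B n := 0 < n /\ kclosure (aprog x p) n.
have FB : FE [:: c; x] B.
  apply: (FE2_intro (fun n => 0 < n) (aprog x p)) => //; last by move=> n [].
  - by apply: contraNneq xpc => <-; rewrite modn_small.
  - by split; [exact: kirch_open_pos | exact: c_gt0].
  - split; [exact: kirch_open_aprog x_gt0 cxp (squarefree_prime pp) | exact: aprog_self].
have [_ [V [tV clV]]] := sub B FB.
have [[openVc Vc] [openVp Vp] [openV2 V2]] :
    [/\ tau c (V c), tau p (V p) & tau (2 * p) (V (2 * p))].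
  by split; apply: tV; rewrite !inE eqxx ?orbT.
have [bc [_ sqbc bcV]] := kirch_nbhd openVc Vc.
have [bp [cpbp sqbp bpV]] := kirch_nbhd openVp Vp.
have [b2 [c2pb2 sqb2 b2V]] := kirch_nbhd openV2 V2.
have cbp : coprime (bp * b2) p.
  by rewrite coprimeMl !(coprime_sym _ p) cpbp (coprime_dvdl _ c2pb2) ?dvdn_mull.
have [n [n_gt0 np bn clc]] := kclosure_aprog_chinese c_bounds pp sqbc cbp.
have cnp : coprime n p.
  by rewrite -coprime_modl np modn_small // coprime_sym prime_coprime // gtnNdvd.
have [_ /(kclosure_aprogP x p n p_gt0)[_ /(_ p (squarefree_prime pp) cnp)]] : B n.
  apply: clV; split=> // y; rewrite !inE => /or3P[]/eqP->.
  - exact: kclosureS bcV clc.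
  - apply: (kclosureS bpV); apply: kclosure_aprog_dvd (squarefree_gt0 sqbp) _ => //.
    exact: dvdn_trans (dvdn_mulr _ _) bn.
  - apply: (kclosureS b2V); apply: kclosure_aprog_dvd (squarefree_gt0 sqb2) _ => //.
    exact: dvdn_trans (dvdn_mull _ _) bn.
by rewrite gcdnn np modn_small // => /eqP; rewrite eq_sym (negbTE xpc).
Qed.

Theorem lemma3p15 (x p : nat) (hx : 3 <= x) (hp : prime p) (hodd : odd p) :
  p %| x <->
  (FE_sub [:: 1; x] [:: 1; p; 2 * p] /\ FE_sub [:: 2; x] [:: 2; p; 2 * p]).
Proof.
have p_gt2 : 2 < p by rewrite ltn_neqAle prime_gt1 // andbT; apply: contraTneq hodd => <-.
split=> [px | [sub1 sub2]]; first by split; apply: FE_sub_dvd => //; lia.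
apply/idPn => npx; have [xp1|xp1] := eqVneq (x %% p) 1.
- by apply: (not_FE_sub_ndvd _ hp npx _ sub2); rewrite ?xp1 //; lia.
- by apply: (not_FE_sub_ndvd _ hp npx xp1 sub1); lia.
Qed.
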